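(* Assume the common support assumption, the overlap assumption, monotone treatment response and monotone treatment selection. Then under both Design 1 and Design 2, for all $x\in\mathcal X$, $1\le\theta(x)\le\Gamma(x,0)$, and these bounds are sharp (they are the best possible bounds on $\theta(x)$ given the distribution of $(Y,T,X)$ and the stated assumptions).
   Context: Population variables: $Y^*\in\{0,1\}$ (outcome), $T^*\in\{0,1\}$ (treatment), $X^*$ (covariate vector). Potential outcomes $Y^*(1),Y^*(0)\in\{0,1\}$ satisfy $Y^*=T^*Y^*(1)+(1-T^* )Y^*(0)$. The observed vector $(Y,T,X)$ arises from Bernoulli sampling: $Y\in\{0,1\}$ is drawn with known probability $h_0:=\Pr(Y=1)\in(0,1)$, and given $Y=y$, $(T,X)$ is drawn from a distribution $\mathcal P_y$. Densities (or mass functions) are denoted by $f$. Design 1 (case-control): for all $t\in\{0,1\}$, $x\in\mathcal X$, $y\in\{0,1\}$, $f_{X|Y}(x\mid y)=f_{X^*|Y^*}(x\mid y)$ and $\Pr(T=t\mid X=x,Y=y)=\Pr(T^*=t\mid X^*=x,Y^*=y)$. Design 2 (case-population): for all $t,x$, $f_{X|Y}(x\mid 0)=f_{X^*}(x)$, $\Pr(T=t\mid X=x,Y=0)=\Pr(T^*=t\mid X^*=x)$, $f_{X|Y}(x\mid 1)=f_{X^*|Y^*}(x\mid 1)$, $\Pr(T=t\mid X=x,Y=1)=\Pr(T^*=t\mid X^*=x,Y^*=1)$. Common support assumption: the support of $X^*$ and that of $X$ given $Y=y$ for $y=0,1$ coincide; call it $\mathcal X$. Let $\Pi(t\mid y,x):=\Pr(T=t\mid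 Y=y,X=x)$, assumed nonzero for all $t,y$. Then $\Gamma(x,0)=\frac{\Pi(1\mid 1,x)\,\Pi(0\mid 0,x)}{\Pi(0\mid 1,x)\,\Pi(1\mid 0,x)}$ (the odds ratio conditional on $X=x$). Causal relative risk: $\theta(x):=\Pr\{Y^*(1)=1\mid X^*=x\}/\Pr\{Y^*(0)=1\mid X^*=x\}$. Overlap: for all $(t,x)\in\{0,1\}\times\mathcal X$, $0<\Pr\{Y^*(t)=1\mid X^*=x\}<1$ and $0<\Pr(T^*=1\mid X^*=x)<1$. Monotone treatment response: $Y^*(1)\ge Y^*(0)$ almost surely. Monotone treatment selection: for all $t\in\{0,1\}$, $x\in\mathcal X$, $\Pr\{Y^*(t)=1\mid T^*=1,X^*=x\}\ge\Pr\{Y^*(t)=1\mid T^*=0,X^*=x\}$. *)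

From HB Require Import structures.
From mathcomp Require Import all_boot all_order all_algebra.
From mathcomp Require Import all_classical all_reals all_analysis.
Set Implicit Arguments. Unset Strict Implicit. Unset Printing Implicit Defensive.
Import Order.TTheory GRing.Theory Num.Theory.
Local Open Scope classical_set_scope.
Local Open Scope ring_scope.

Section Model.
Context {d : measure_display} {X : measurableType d} {R : realType}.

(* A population: X* has density [g] w.r.t. the base measure, and
   [q x y1 y0 t] = Pr(Y*(1)=y1, Y*(0)=y0, T*=t | X*=x). *)
Record Population := MkPopulation {
  pop_g : X -> R;
  pop_q : X -> bool -> bool -> bool -> R }.

(* Observed distribution of (T,X) given Y=y:
   [obs_f y x] = f_{X|Y}(x|y),  [obs_Pi t y x] = Pi(t|y,x) = Pr(T=t|Y=y,X=x). *)
Record Observed := MkObserved {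
  obs_f : bool -> X -> R;
  obs_Pi : bool -> bool -> X -> R }.

Definition IsPopulation (mu : {measure set X -> \bar R}) (P : Population) : Prop :=
  measurable_fun setT (pop_g P) /\
  (forall x, 0 <= pop_g P x) /\
  (\int[mu]_x (pop_g P x)%:E = 1)%E /\
  (forall x y1 y0 t, 0 <= pop_q P x y1 y0 t) /\
  (forall x, \sum_(y1 : bool) \sum_(y0 : bool) \sum_(t : bool) pop_q P x y1 y0 t = 1) /\
  (forall y1 y0 t, measurable_fun setT (fun x => pop_q P x y1 y0 t)).

Definition outcome (y1 y0 t : bool) : bool := if t then y1 else y0.

Definition pYT_X (P : Population) (x : X) (y t : bool) : R :=
  \sum_(y1 : bool) \sum_(y0 : bool) (if outcome y1 y0 t == y then pop_q P x y1 y0 t else 0).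

Definition pY_X (P : Population) (x : X) (y : bool) : R := \sum_(t : bool) pYT_X P x y t.

Definition pT_X (P : Population) (t : bool) (x : X) : R := \sum_(y : bool) pYT_X P x y t.

Definition pT_YX (P : Population) (t y : bool) (x : X) : R := pYT_X P x y t / pY_X P x y.

Definition pY (mu : {measure set X -> \bar R}) (P : Population) (y : bool) : R :=
  fine (\int[mu]_x (pop_g P x * pY_X P x y)%:E)%E.

Definition fX_Y (mu : {measure set X -> \bar R}) (P : Population) (y : bool) (x : X) : R :=
  pop_g P x * pY_X P x y / pY mu P y.

(* Pr(Y*(t)=1 | X*=x) *)
Definition pPO (P : Population) (t : bool) (x : X) : R :=
  \sum_(y1 : bool) \sum_(y0 : bool) \sum_(s : bool)
     (if (if t then y1 else y0) then pop_q P x y1 y0 s else 0).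

(* Pr(Y*(t)=1 | T*=s, X*=x) *)
Definition pPO_T (P : Population) (t s : bool) (x : X) : R :=
  (\sum_(y1 : bool) \sum_(y0 : bool)
     (if (if t then y1 else y0) then pop_q P x y1 y0 s else 0)) / pT_X P s x.

Definition theta (P : Population) (x : X) : R := pPO P true x / pPO P false x.

Definition Gamma (O : Observed) (x : X) : R :=
  obs_Pi O true true x * obs_Pi O false false x /
  (obs_Pi O false true x * obs_Pi O true false x).

Definition suppX (P : Population) : set X := [set x | 0 < pop_g P x].

Definition CommonSupport (P : Population) (O : Observed) : Prop :=
  suppX P = [set x | 0 < obs_f O false x] /\ suppX P = [set x | 0 < obs_f O true x].

Definition Overlap (P : Population) : Prop :=
  forall x, suppX P x ->
    (forall t, 0 < pPO P t x < 1) /\ 0 < pT_X P true x < 1.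

(* Monotone treatment response: Pr(Y*(1) < Y*(0) | X*=x) = 0 on the support *)
Definition MTR (P : Population) : Prop :=
  forall x, suppX P x -> pop_q P x false true true + pop_q P x false true false = 0.

Definition MTS (P : Population) : Prop :=
  forall x, suppX P x -> forall t, pPO_T P t false x <= pPO_T P t true x.

Inductive design := Design1 | Design2.

Definition DesignRel (mu : {measure set X -> \bar R}) (D : design)
    (P : Population) (O : Observed) : Prop :=
  match D with
  | Design1 =>
      (forall y x, obs_f O y x = fX_Y mu P y x) /\
      (forall t y x, suppX P x -> obs_Pi O t y x = pT_YX P t y x)
  | Design2 =>
      [/\ (forall x, obs_f O false x = pop_g P x),
          (forall t x, suppX P x -> obs_Pi O t false x = pT_X P t x),
          (forall x, obs_f O true x = fX_Y mu P true x)
        & (forall t x, suppX P x -> obs_Pi O t true x = pT_YX P t true x)]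
  end.

Definition PiNonzero (O : Observed) (S : set X) : Prop :=
  forall t y x, S x -> obs_Pi O t y x != 0.

Definition Admissible (mu : {measure set X -> \bar R}) (D : design)
    (O : Observed) (P : Population) : Prop :=
  IsPopulation mu P /\ CommonSupport P O /\ Overlap P /\ MTR P /\ MTS P /\
  DesignRel mu D P O.

End Model.

From HB Require Import structures.
From mathcomp Require Import all_boot all_order all_algebra.
From mathcomp Require Import all_classical all_reals all_analysis.
From mathcomp Require Import measurable_realfun ring lra.

(* Write r_t = Pr(Y = 1 | T = t, x) for the observed risks.  Pr(Y*(1) = 1 | x) is
   an average over T* of Pr(Y*(1) = 1 | T*, x); its treated term is r_1 and monotone
   treatment selection bounds the untreated one by r_1, so Pr(Y*(1) = 1 | x) <= r_1.
   Dually Pr(Y*(0) = 1 | x) >= r_0, and monotone treatment response gives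
   theta >= 1, whence 1 <= theta <= r_1 / r_0.  In Design 2 this risk ratio is
   Gamma; in Design 1 Gamma is the odds ratio, which dominates it since r_0 <= r_1.

   For sharpness, the data leave the counterfactual risks Pr(Y*(0) = 1 | T* = 1)
   and Pr(Y*(1) = 1 | T* = 0) free in [r_0, r_1]: the pair (r_1, r_0) gives
   theta = 1 and the pair (r_0, r_1) gives theta = r_1 / r_0.  Design 1 does not
   identify Pr(Y* = 1 | x): scaling the odds of Y* = 1 by k > 0 and reweighting
   the covariate density leaves the observed law unchanged, and as k -> 0 the risk
   ratio tends to the odds ratio.  In Design 2, moving half of the Y = 1 mass to
   Y = 0 keeps the observed law and makes every cell positive. *)

Set Implicit Arguments.
Unset Strict Implicit.
Unset Printing Implicit Defensive.

Import Order.TTheory GRing.Theory Num.Theory numFieldNormedType.Exports.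
Local Open Scope classical_set_scope.
Local Open Scope ring_scope.

Lemma measurable_inv (R : realType) : measurable_fun setT (@GRing.inv R).
Proof.
have -> : [set: R] = [set x | x != 0] `|` [set 0].
  by apply/seteqP; split => x //= _; case: (eqVneq x 0); [right|left].
have neq0_open : open [set x : R | x != 0] by exact: open_neq.
apply/measurable_funU; [exact: open_measurable | exact: measurable_set1 |].
split.
  apply: open_continuous_measurable_fun => // x; rewrite inE => x0.
  exact: inv_continuous.
move=> _ B mB /=; case: (pselect (B 0^-1)) => B0.
  rewrite (_ : _ `&` _ = [set 0]); first exact: measurable_set1.
  by apply/seteqP; split => [x [] //|x /= ->].
rewrite (_ : _ `&` _ = set0) //.
by apply/seteqP; split => [x [] /= -> //|x].
Qed.

Section JointLaw.
Context {R : realFieldType}.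
Implicit Types (p : bool -> bool -> R) (c k : R).

(* [p y t] is the probability of [Y = y, T = t] at a fixed covariate value. *)

Definition margT p t := p true t + p false t.

Definition risk p t := p true t / margT p t.

Definition risk_ratio p := risk p true / risk p false.

Definition odds_ratio p := p true true * p false false / (p true false * p false true).

Definition tilt k p y t := (if y then k else 1) * p y t.

(* A joint law of [Y*(1)], [Y*(0)], [T*] with marginal [p] of [(Y, T)] and no
   units with [Y*(1) < Y*(0)]; [rho0] and [rho1] are the counterfactual risks
   Pr(Y*(0) = 1 | T* = 1) and Pr(Y*(1) = 1 | T* = 0), which the data leave free. *)
Definition coupling p (rho0 rho1 : R) (y1 y0 t : bool) : R :=
  match y1, y0, t with
  | true, true, true => margT p true * rho0
  | true, false, true => p true true - margT p true * rho0
  | false, false, true => p false true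
  | true, true, false => p true false
  | true, false, false => margT p false * rho1 - p true false
  | false, false, false => margT p false * (1 - rho1)
  | false, true, _ => 0
  end.

Lemma tilted_sum_gt0 k (a b : R) : 0 < k -> 0 <= a -> 0 <= b -> a + b = 1 -> 0 < k * a + b.
Proof.
move=> k_gt0 a_ge0 b_ge0 ab1; have [k_le1|k_gt1] := lerP k 1.
- have : 0 <= b * (1 - k) by rewrite mulr_ge0 // subr_ge0.
  nra.
- have : 0 <= a * (k - 1) by rewrite mulr_ge0 // subr_ge0 ltW.
  nra.
Qed.

Lemma margT_gt0 p t : (forall y, 0 <= p y t) -> 0 < p true t -> 0 < margT p t.
Proof. by move=> p0 p1; have := p0 false; rewrite /margT; lra. Qed.

Lemma risk_ge0 p t : (forall y, 0 <= p y t) -> 0 <= risk p t.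
Proof. by move=> p0; rewrite /risk divr_ge0 ?addr_ge0. Qed.

Lemma risk_le1 p t : (forall y, 0 <= p y t) -> risk p t <= 1.
Proof.
move=> p0; have [m0|m_neq0] := eqVneq (margT p t) 0; first by rewrite /risk m0 invr0 mulr0.
by rewrite /risk ler_pdivrMr ?mul1r ?lerDl // lt0r m_neq0 addr_ge0.
Qed.

Lemma margT_risk p t : (forall y, 0 <= p y t) -> margT p t * risk p t = p true t.
Proof.
move=> p0; have [m0|m_neq0] := eqVneq (margT p t) 0; last by rewrite /risk mulrCA divff ?mulr1.
have p1_0 : p true t = 0 by move: m0 (p0 true) (p0 false); rewrite /margT; lra.
by rewrite m0 mul0r p1_0.
Qed.

Lemma risk_gt0 p t : (forall y, 0 <= p y t) -> 0 < p true t -> 0 < risk p t.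
Proof. by move=> p0 p1; rewrite /risk divr_gt0 ?margT_gt0. Qed.

Lemma risk_lt1 p t : (forall y, 0 <= p y t) -> 0 < p false t -> risk p t < 1.
Proof.
move=> p0 p1; have := p0 true; rewrite /risk /margT => p1_ge0.
by rewrite ltr_pdivrMr ?mul1r ?ltrDl //; lra.
Qed.

Lemma risk_scale c p t : c != 0 -> risk (fun y t => c * p y t) t = risk p t.
Proof. by move=> c0; rewrite /risk /margT -mulrDr invfM mulrACA divff ?mul1r. Qed.

Lemma risk_tilt k p t : risk (tilt k p) t = k * p true t / (k * p true t + p false t).
Proof. by rewrite /risk /margT /tilt !mul1r. Qed.

Section Positive.
Variable p : bool -> bool -> R.
Hypothesis p_gt0 : forall y t, 0 < p y t.

Lemma risk_le_risk :
  (risk p false <= risk p true) = (p true false * p false true <= p true true * p false false).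
Proof.
have m_gt0 t : 0 < margT p t by rewrite addr_gt0.
rewrite /risk ler_pdivrMr // mulrAC ler_pdivlMr // /margT !mulrDr.
by rewrite [p true true * p true false]mulrC lerD2l.
Qed.

Lemma risk_ratio_le_odds_ratio : risk p false <= risk p true -> risk_ratio p <= odds_ratio p.
Proof.
rewrite risk_le_risk => or_ge1.
have m_gt0 t : 0 < margT p t by rewrite addr_gt0.
have ne0 y t : p y t != 0 by rewrite gt_eqF.
have -> : risk_ratio p = p true true / p true false * (margT p false / margT p true).
  by rewrite /risk_ratio /risk; field; rewrite ?ne0 ?gt_eqF.
have -> : odds_ratio p = p true true / p true false * (p false false / p false true).
  by rewrite /odds_ratio; field; rewrite ?ne0.
rewrite ler_pM2l ?divr_gt0 // ler_pdivrMr // mulrAC ler_pdivlMr // /margT.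
nra.
Qed.

Lemma exists_tilt_risk_ratio_gt c :
  c < odds_ratio p -> exists2 k, 0 < k & c < risk_ratio (tilt k p).
Proof.
have p_ne0 y t : p y t != 0 by rewrite gt_eqF.
have q_gt0 : 0 < p true false * p false true by rewrite mulr_gt0.
rewrite /odds_ratio ltr_pdivlMr // -subr_gt0.
set D := _ - _ => D_gt0.
have absc_gt0 : 0 < 1 + `|c| by rewrite ltr_pwDl.
(* any [k] with [k * p true false * p true true * (c - 1) < D] works *)
pose k := D / (p true false * p true true * (1 + `|c|)).
have k_gt0 : 0 < k by rewrite divr_gt0 // !mulr_gt0.
have kE : k * (p true false * p true true) * (1 + `|c|) = D.
  by rewrite /k -mulrA divfK // gt_eqF // !mulr_gt0.
clearbody k; exists k => //.
have -> : risk_ratio (tilt k p) = p true true * (k * p true false + p false false) /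
    (p true false * (k * p true true + p false true)).
  rewrite /risk_ratio !risk_tilt; field.
  by apply/and4P; split; apply: lt0r_neq0; rewrite ?addr_gt0 ?mulr_gt0.
rewrite ltr_pdivlMr; last by rewrite !mulr_gt0 ?addr_gt0 ?mulr_gt0.
have c_lt : c - 1 < 1 + `|c| by have := ler_norm c; lra.
have u_gt0 : 0 < k * (p true false * p true true) by rewrite !mulr_gt0.
have := c_lt; rewrite -(ltr_pM2l u_gt0) kE /D.
lra.
Qed.

End Positive.

Lemma tilt_gt0 k p : 0 < k -> (forall y t, 0 < p y t) -> forall y t, 0 < tilt k p y t.
Proof. by move=> k_gt0 p_gt0 [] t; rewrite /tilt ?mul1r ?mulr_gt0. Qed.

Lemma risk_le_tilt k p : 0 < k -> (forall y t, 0 < p y t) ->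
  risk p false <= risk p true -> risk (tilt k p) false <= risk (tilt k p) true.
Proof.
move=> k_gt0 p_gt0; rewrite (risk_le_risk p_gt0) (risk_le_risk (tilt_gt0 k_gt0 p_gt0)).
by rewrite /tilt !mul1r -!mulrA ler_pM2l.
Qed.

End JointLaw.

Section PopulationLaw.
Context {d : measure_display} {X : measurableType d} {R : realType}.
Variable P : @Population d X R.
Implicit Types (x : X) (y t s : bool).
Local Notation q := (pop_q P).

Lemma pYT_XE x y t : pYT_X P x y t =
  if t then q x y true t + q x y false t else q x true y t + q x false y t.
Proof. by case: y; case: t; rewrite /pYT_X !big_bool /= ?addr0 ?add0r. Qed.

Lemma pT_XE x t : pT_X P t x = margT (pYT_X P x) t.
Proof. by rewrite /pT_X big_bool. Qed.

Lemma pY_XE x y : pY_X P x y = pYT_X P x y true + pYT_X P x y false.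
Proof. by rewrite /pY_X big_bool. Qed.

Lemma pPO_T_diag x t : pPO_T P t t x = risk (pYT_X P x) t.
Proof.
rewrite /pPO_T /risk -pT_XE !pYT_XE; congr (_ / _).
by case: t; rewrite !big_bool /= ?addr0 ?add0r.
Qed.

Lemma pPO_total x t : (forall s, pT_X P s x != 0) ->
  pPO P t x = pT_X P true x * pPO_T P t true x + pT_X P false x * pPO_T P t false x.
Proof.
move=> pT_neq0; rewrite /pPO_T !(mulrCA (pT_X P _ x)) !divff // !mulr1.
by rewrite /pPO !big_bool; case: t => /=; ring.
Qed.

Section MonotoneBounds.
Variable x : X.
Hypothesis q_ge0 : forall y1 y0 t, 0 <= q x y1 y0 t.
Hypothesis q_sum : \sum_(y1 : bool) \sum_(y0 : bool) \sum_(t : bool) q x y1 y0 t = 1.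
Hypotheses (mtr : MTR P) (mts : MTS P) (overlap : Overlap P) (xP : suppX P x).

Let no_defier : q x false true true = 0 /\ q x false true false = 0.
Proof. by have := mtr xP; have := q_ge0 false true true; have := q_ge0 false true false; lra. Qed.

Let pT_sum : pT_X P true x + pT_X P false x = 1.
Proof. by rewrite -q_sum !pT_XE /margT !pYT_XE !big_bool /=; ring. Qed.

Let pT_gt0 s : 0 < pT_X P s x.
Proof. by have [_ /andP[]] := overlap xP; have := pT_sum; case: s; lra. Qed.

Lemma theta_ge1 : 1 <= theta P x.
Proof.
have /andP[pPO0_gt0 _] := (overlap xP).1 false.
rewrite /theta ler_pdivlMr // mul1r.
have [q011 q010] := no_defier.
rewrite /pPO !big_bool /= q011 q010.
by have := q_ge0 true false true; have := q_ge0 true false false; lra.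
Qed.

Lemma risk_untreated_le_treated : risk (pYT_X P x) false <= risk (pYT_X P x) true.
Proof.
rewrite -!pPO_T_diag; apply: le_trans (mts xP false) _.
rewrite /pPO_T ler_pM2r ?invr_gt0 // !big_bool /=.
by have [-> _] := no_defier; have := q_ge0 true false true; lra.
Qed.

Lemma theta_le_risk_ratio : 0 < pYT_X P x true false -> theta P x <= risk_ratio (pYT_X P x).
Proof.
move=> p10_gt0.
have pT_neq0 s : pT_X P s x != 0 by rewrite gt_eqF.
have r0_gt0 : 0 < risk (pYT_X P x) false.
  by rewrite risk_gt0 // => y; rewrite pYT_XE addr_ge0.
have pPO1_le : pPO P true x <= risk (pYT_X P x) true.
  have := mts xP true; rewrite pPO_total // pPO_T_diag.
  have := pT_sum; have := pT_gt0 false; nra.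
have pPO0_ge : risk (pYT_X P x) false <= pPO P false x.
  have := mts xP false; rewrite pPO_total // pPO_T_diag.
  have := pT_sum; have := pT_gt0 true; nra.
have pPO_gt0 t : 0 < pPO P t x by have /andP[] := (overlap xP).1 t.
by rewrite /theta /risk_ratio ler_pM ?invr_ge0 ?lef_pV2 ?posrE // ltW.
Qed.

End MonotoneBounds.
End PopulationLaw.

Section IsPopulationFacts.
Context {d : measure_display} {X : measurableType d} {R : realType}.
Variables (mu : {measure set X -> \bar R}) (P : @Population d X R).
Hypothesis HP : IsPopulation mu P.
Implicit Types (x : X) (y t : bool).

Lemma pYT_X_ge0 x y t : 0 <= pYT_X P x y t.
Proof. by have [_ [_ [_ [q_ge0 _]]]] := HP; rewrite pYT_XE; case: t; rewrite addr_ge0. Qed.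

Lemma pYT_X_sum x :
  pYT_X P x true true + pYT_X P x true false + pYT_X P x false true + pYT_X P x false false = 1.
Proof. by have [_ [_ [_ [_ [/(_ x) <- _]]]]] := HP; rewrite !pYT_XE !big_bool /=; ring. Qed.

Lemma pYT_X_meas y t : measurable_fun setT (fun x => pYT_X P x y t).
Proof.
have [_ [_ [_ [_ [_ q_meas]]]]] := HP.
under eq_fun do rewrite pYT_XE.
by case: t; apply: measurable_funD.
Qed.

Lemma pY_X_ge0 x y : 0 <= pY_X P x y.
Proof. by rewrite pY_XE addr_ge0 ?pYT_X_ge0. Qed.

Lemma pY_X_sum x : pY_X P x true + pY_X P x false = 1.
Proof. by rewrite !pY_XE -(pYT_X_sum x); ring. Qed.

Lemma pY_X_meas y : measurable_fun setT (fun x => pY_X P x y).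
Proof. by under eq_fun do rewrite pY_XE; apply: measurable_funD; exact: pYT_X_meas. Qed.

Let gpY_ge0 y x : 0 <= pop_g P x * pY_X P x y.
Proof. by have [_ [g_ge0 _]] := HP; rewrite mulr_ge0 ?pY_X_ge0. Qed.

Let gpY_meas y : measurable_fun setT (fun x => (pop_g P x * pY_X P x y)%:E).
Proof. by have [g_meas _] := HP; apply/measurable_EFinP/measurable_funM/pY_X_meas. Qed.

Lemma integral_pY y : (\int[mu]_x (pop_g P x * pY_X P x y)%:E = (pY mu P y)%:E)%E.
Proof.
have [g_meas [g_ge0 [g_int _]]] := HP.
rewrite /pY fineK // ge0_fin_numE; last by apply: integral_ge0 => x _; rewrite lee_fin.
rewrite (@le_lt_trans _ _ 1%E) ?ltry // -g_int ge0_le_integral //.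
- by move=> x _; rewrite lee_fin.
- exact/measurable_EFinP.
- move=> x _; rewrite lee_fin ler_piMr //.
  by have := pY_X_sum x; have := pY_X_ge0 x true; have := pY_X_ge0 x false; case: y; lra.
Qed.

Lemma pY_ge0 y : 0 <= pY mu P y.
Proof. by rewrite -lee_fin -integral_pY integral_ge0 // => x _; rewrite lee_fin. Qed.

Lemma integral_pY_mix a b : 0 <= a -> 0 <= b ->
  (\int[mu]_x (a * (pop_g P x * pY_X P x true) + b * (pop_g P x * pY_X P x false))%:E =
   (a * pY mu P true + b * pY mu P false)%:E)%E.
Proof.
move=> a_ge0 b_ge0; under eq_integral do rewrite EFinD (EFinM a) (EFinM b).
rewrite ge0_integralD //; last 4 first.
- by move=> x _; rewrite -EFinM lee_fin mulr_ge0.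
- exact: measurable_funeM.
- by move=> x _; rewrite -EFinM lee_fin mulr_ge0.
- exact: measurable_funeM.
rewrite !ge0_integralZl_EFin //; try by move=> x _; rewrite lee_fin.
by rewrite !integral_pY.
Qed.

Lemma pY_sum : pY mu P true + pY mu P false = 1.
Proof.
have [_ [_ [g_int _]]] := HP.
apply: EFin_inj; rewrite -[pY _ _ true]mul1r -[pY _ _ false]mul1r -integral_pY_mix //.
by rewrite -g_int; apply: eq_integral => x _; rewrite !mul1r -mulrDr pY_X_sum mulr1.
Qed.

Lemma pY_scale (Q : @Population d X R) y c : 0 <= c ->
  (forall x, pop_g Q x * pY_X Q x y = c * (pop_g P x * pY_X P x y)) ->
  pY mu Q y = c * pY mu P y.
Proof.
move=> c_ge0 gQ; rewrite {1}/pY.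
under eq_integral => x _ do rewrite gQ EFinM.
rewrite ge0_integralZl_EFin //; last by move=> x _; rewrite lee_fin.
by rewrite integral_pY.
Qed.

Lemma fX_Y_scale (Q : @Population d X R) y c : 0 < c ->
  (forall x, pop_g Q x * pY_X Q x y = c * (pop_g P x * pY_X P x y)) ->
  forall x, fX_Y mu Q y x = fX_Y mu P y x.
Proof.
move=> c_gt0 gQ x; rewrite /fX_Y gQ (pY_scale (ltW c_gt0) gQ).
by rewrite invfM mulrACA divff ?gt_eqF ?mul1r.
Qed.

End IsPopulationFacts.

Lemma pT_YX_scale {d : measure_display} {X : measurableType d} {R : realType}
    (P Q : @Population d X R) x y c : c != 0 ->
  (forall t, pYT_X Q x y t = c * pYT_X P x y t) ->
  forall t, pT_YX Q t y x = pT_YX P t y x.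
Proof.
by move=> c_neq0 pQ t; rewrite /pT_YX !pY_XE !pQ -mulrDr invfM mulrACA divff ?mul1r.
Qed.

Section MeasurableRisk.
Context {d : measure_display} {X : measurableType d} {R : realType}.
Variables (f : X -> bool -> bool -> R) (t : bool).
Hypothesis f_meas : forall y, measurable_fun setT (fun x => f x y t).

Lemma measurable_margT : measurable_fun setT (fun x => margT (f x) t).
Proof. exact: measurable_funD. Qed.

Lemma measurable_risk : measurable_fun setT (fun x => risk (f x) t).
Proof.
apply: measurable_funM => //.
exact: measurableT_comp (@measurable_inv R) measurable_margT.
Qed.

End MeasurableRisk.

Section CounterfactualPopulation.
Context {d : measure_display} {X : measurableType d} {R : realType}.
Variables (g : X -> R) (f : X -> bool -> bool -> R) (rho0 rho1 : X -> R).

Definition cf_population : @Population d X R :=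
  MkPopulation g (fun x => coupling (f x) (rho0 x) (rho1 x)).

Local Notation Q := cf_population.

Lemma cf_joint x : pYT_X Q x = f x.
Proof.
apply/funext => y; apply/funext => t.
by rewrite pYT_XE /= /margT; case: y; case: t => /=; ring.
Qed.

Lemma cf_MTR : MTR Q.
Proof. by move=> x _; rewrite /= addr0. Qed.

Lemma cf_pT x t : pT_X Q t x = margT (f x) t.
Proof. by rewrite pT_XE cf_joint. Qed.

Lemma cf_pPO_T10 x : margT (f x) false != 0 -> pPO_T Q true false x = rho1 x.
Proof.
move=> m0; rewrite /pPO_T cf_pT !big_bool /=.
by rewrite addr0 addrCA subrr !addr0 mulrC mulKf.
Qed.

Lemma cf_pPO_T01 x : margT (f x) true != 0 -> pPO_T Q false true x = rho0 x.
Proof. by move=> m1; rewrite /pPO_T cf_pT !big_bool /= !addr0 mulrC mulKf. Qed.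

Lemma cf_pPO x t : (forall s, margT (f x) s != 0) ->
  pPO Q t x = margT (f x) true * (if t then risk (f x) true else rho0 x) +
              margT (f x) false * (if t then rho1 x else risk (f x) false).
Proof.
move=> m_neq0; have pT_neq0 s : pT_X Q s x != 0 by rewrite cf_pT.
rewrite pPO_total // !cf_pT.
by case: t; rewrite pPO_T_diag cf_joint ?cf_pPO_T10 ?cf_pPO_T01.
Qed.

Lemma cf_theta x : (forall s, margT (f x) s != 0) ->
  theta Q x = (margT (f x) true * risk (f x) true + margT (f x) false * rho1 x) /
              (margT (f x) true * rho0 x + margT (f x) false * risk (f x) false).
Proof. by move=> m_neq0; rewrite /theta !cf_pPO. Qed.

Section Valid.
Hypothesis f_ge0 : forall x y t, 0 <= f x y t.
Hypothesis f_sum : forall x, margT (f x) true + margT (f x) false = 1.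
Hypothesis f_meas : forall y t, measurable_fun setT (fun x => f x y t).
Hypotheses (rho0_meas : measurable_fun setT rho0) (rho1_meas : measurable_fun setT rho1).
Hypothesis rho0_range : forall x, 0 <= rho0 x <= risk (f x) true.
Hypothesis rho1_range : forall x, risk (f x) false <= rho1 x <= 1.

Lemma cf_IsPopulation (mu : {measure set X -> \bar R}) :
  measurable_fun setT g -> (forall x, 0 <= g x) -> (\int[mu]_x (g x)%:E = 1)%E ->
  IsPopulation mu Q.
Proof.
move=> g_meas g_ge0 g_int; do 3 split => //; split.
  move=> x y1 y0 t /=.
  have m1_ge0 : 0 <= margT (f x) true by rewrite addr_ge0.
  have m0_ge0 : 0 <= margT (f x) false by rewrite addr_ge0.
  have r1E : margT (f x) true * risk (f x) true = f x true true by rewrite margT_risk.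
  have r0E : margT (f x) false * risk (f x) false = f x true false by rewrite margT_risk.
  move: (rho0_range x) (rho1_range x) => /andP[? ?] /andP[? ?].
  by case: y1; case: y0; case: t => //=; nra.
split=> [x|y1 y0 t].
  by have := f_sum x; rewrite !big_bool /= /margT; lra.
have m_meas s : measurable_fun setT (fun x => margT (f x) s) by exact: measurable_margT.
by case: y1; case: y0; case: t => /=;
  do ?[exact: measurable_cst | exact: f_meas | exact: m_meas | apply: measurable_funB |
       apply: measurable_funM].
Qed.

End Valid.

Section Positivity.
Variable x : X.
Hypothesis f_gt0 : forall y t, 0 < f x y t.
Hypothesis f_sum : margT (f x) true + margT (f x) false = 1.
Hypothesis rho0_mid : risk (f x) false <= rho0 x <= risk (f x) true.
Hypothesis rho1_mid : risk (f x) false <= rho1 x <= risk (f x) true.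

Let f_ge0 t y : 0 <= f x y t. Proof. exact: ltW. Qed.
Let m_gt0 t : 0 < margT (f x) t. Proof. exact: addr_gt0. Qed.
Let m_neq0 t : margT (f x) t != 0. Proof. by rewrite gt_eqF. Qed.

Lemma cf_overlap_at : (forall t, 0 < pPO Q t x < 1) /\ 0 < pT_X Q true x < 1.
Proof.
have r0_gt0 : 0 < risk (f x) false by rewrite risk_gt0.
have r1_lt1 : risk (f x) true < 1 by rewrite risk_lt1.
split; last by rewrite cf_pT; have := m_gt0 false; have := m_gt0 true; have := f_sum; lra.
move=> t; rewrite cf_pPO //.
move: (m_gt0 true) (m_gt0 false) f_sum rho0_mid rho1_mid => ? ? ? /andP[? ?] /andP[? ?].
by case: t; apply/andP; split; nra.
Qed.

Lemma cf_MTS_at t : pPO_T Q t false x <= pPO_T Q t true x.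
Proof.
case: t; rewrite ?pPO_T_diag cf_joint ?cf_pPO_T10 ?cf_pPO_T01 //.
- by case/andP: rho1_mid.
- by case/andP: rho0_mid.
Qed.

End Positivity.

End CounterfactualPopulation.

Definition null_population {d : measure_display} {X : measurableType d} {R : realType}
    (g : X -> R) (f : X -> bool -> bool -> R) : @Population d X R :=
  cf_population g f (fun x => risk (f x) true) (fun x => risk (f x) false).

(* The min and max only matter off the support, where the risks need not be ordered. *)
Definition extremal_population {d : measure_display} {X : measurableType d} {R : realType}
    (g : X -> R) (f : X -> bool -> bool -> R) : @Population d X R :=
  cf_population g f (fun x => Num.min (risk (f x) false) (risk (f x) true))
                    (fun x => Num.max (risk (f x) false) (risk (f x) true)).

Section Witnesses.
Context {d : measure_display} {X : measurableType d} {R : realType}.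
Variables (mu : {measure set X -> \bar R}) (P : @Population d X R).

(* [g] is a density of X* and [f x y t] = Pr(Y* = y, T* = t | X* = x). *)
Record FactualModel (g : X -> R) (f : X -> bool -> bool -> R) : Prop := {
  fm_g_meas : measurable_fun setT g;
  fm_g_ge0 : forall x, 0 <= g x;
  fm_g_int : (\int[mu]_x (g x)%:E = 1)%E;
  fm_supp : forall x, (0 < g x) = (0 < pop_g P x);
  fm_f_ge0 : forall x y t, 0 <= f x y t;
  fm_f_sum : forall x, margT (f x) true + margT (f x) false = 1;
  fm_f_meas : forall y t, measurable_fun setT (fun x => f x y t);
  fm_f_gt0 : forall x, suppX P x -> forall y t, 0 < f x y t;
  fm_risk_le : forall x, suppX P x -> risk (f x) false <= risk (f x) true }.

Variables (D : design) (O : @Observed d X R) (g : X -> R) (f : X -> bool -> bool -> R).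
Hypothesis PA : Admissible mu D O P.
Hypothesis fm : FactualModel g f.

Lemma cf_admissible (rho0 rho1 : X -> R) :
  measurable_fun setT rho0 -> measurable_fun setT rho1 ->
  (forall x, 0 <= rho0 x <= risk (f x) true) ->
  (forall x, risk (f x) false <= rho1 x <= 1) ->
  (forall x, suppX P x -> risk (f x) false <= rho0 x <= risk (f x) true /\
                          risk (f x) false <= rho1 x <= risk (f x) true) ->
  DesignRel mu D (cf_population g f rho0 rho1) O ->
  Admissible mu D O (cf_population g f rho0 rho1).
Proof.
move=> rho0_meas rho1_meas rho0_range rho1_range rho_mid DR.
have [_ [[CS0 CS1] _]] := PA.
case: fm => g_meas g_ge0 g_int g_supp f_ge0 f_sum f_meas f_gt0 _.
have supp_eq : suppX (cf_population g f rho0 rho1) = suppX P.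
  by apply/seteqP; split => x; rewrite /suppX /= g_supp.
split; first exact: cf_IsPopulation.
split; first by rewrite /CommonSupport supp_eq.
split.
  move=> x; rewrite supp_eq => xP; have [? ?] := rho_mid x xP.
  by apply: cf_overlap_at => //; exact: f_gt0.
split; first exact: cf_MTR.
split=> // x; rewrite supp_eq => xP t; have [? ?] := rho_mid x xP.
by apply: cf_MTS_at => //; exact: f_gt0.
Qed.

Let risk_range x t : 0 <= risk (f x) t <= 1.
Proof.
by rewrite risk_ge0 ?risk_le1 // => y; exact: fm_f_ge0 fm x y t.
Qed.

Let risk_meas t : measurable_fun setT (fun x => risk (f x) t).
Proof. by apply: measurable_risk => y; exact: fm_f_meas fm y t. Qed.

Lemma null_admissible : DesignRel mu D (null_population g f) O ->
  Admissible mu D O (null_population g f).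
Proof.
apply: cf_admissible => // x.
- by rewrite lexx andbT; case/andP: (risk_range x true).
- by rewrite lexx; case/andP: (risk_range x false).
- by move=> xP; rewrite (fm_risk_le fm xP) !lexx.
Qed.

Lemma extremal_admissible : DesignRel mu D (extremal_population g f) O ->
  Admissible mu D O (extremal_population g f).
Proof.
apply: cf_admissible => //.
- exact: measurable_minr.
- exact: measurable_maxr.
- move=> x; rewrite ge_min lexx orbT andbT le_min.
  by case/andP: (risk_range x false) => -> _; case/andP: (risk_range x true) => ->.
- move=> x; rewrite le_max lexx ge_max.
  by case/andP: (risk_range x false) => _ ->; case/andP: (risk_range x true) => _ ->.
- move=> x xP; have r_le := fm_risk_le fm xP.
  by rewrite (min_l r_le) (max_r r_le) r_le !lexx.
Qed.

Section AtSupport.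
Variable x : X.
Hypothesis xP : suppX P x.

Let m_gt0 t : 0 < margT (f x) t.
Proof. by rewrite addr_gt0 ?(fm_f_gt0 fm xP). Qed.

Let r_gt0 t : 0 < risk (f x) t.
Proof. by rewrite risk_gt0 ?(fm_f_gt0 fm xP) // => y; exact: fm_f_ge0 fm x y t. Qed.

Let m_neq0 t : margT (f x) t != 0.
Proof. by rewrite gt_eqF. Qed.

Lemma null_theta : theta (null_population g f) x = 1.
Proof.
rewrite cf_theta // divff // lt0r_neq0 //.
by apply: addr_gt0; apply: mulr_gt0.
Qed.

Lemma extremal_theta : theta (extremal_population g f) x = risk_ratio (f x).
Proof.
have r_le := fm_risk_le fm xP.
by rewrite cf_theta // (min_l r_le) (max_r r_le) -!mulrDl (fm_f_sum fm) !mul1r.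
Qed.

End AtSupport.

End Witnesses.

Section Identification.
Context {d : measure_display} {X : measurableType d} {R : realType}.
Variables (mu : {measure set X -> \bar R}) (D : design).
Variables (O : @Observed d X R) (P : @Population d X R).
Hypotheses (PA : Admissible mu D O P) (PiP : PiNonzero O (suppX P)).
Variable x : X.
Hypothesis xP : suppX P x.

Let joint_gt0_of_Pi y t : obs_Pi O t y x = pT_YX P t y x -> 0 < pYT_X P x y t.
Proof.
move=> Pi_eq; have := PiP t y xP; rewrite Pi_eq lt0r => Pi_neq0.
rewrite (pYT_X_ge0 PA.1) andbT; apply: contra Pi_neq0 => /eqP p0.
by rewrite /pT_YX p0 mul0r.
Qed.

Lemma joint_treated_gt0 t : 0 < pYT_X P x true t.
Proof.
have [_ [_ [_ [_ [_]]]]] := PA.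
by case: D => [[_ Pi_eq]|[_ _ _ Pi_eq]]; apply: joint_gt0_of_Pi; exact: Pi_eq.
Qed.

Lemma joint_gt0_design1 y t : D = Design1 -> 0 < pYT_X P x y t.
Proof.
have [_ [_ [_ [_ [_]]]]] := PA.
by move=> + eD; rewrite eD => -[_ Pi_eq]; apply: joint_gt0_of_Pi; exact: Pi_eq.
Qed.

Lemma admissible_risk_le : risk (pYT_X P x) false <= risk (pYT_X P x) true.
Proof.
have [[_ [_ [_ [q_ge0 [q_sum _]]]]] [_ [overlap [mtr [mts _]]]]] := PA.
exact: risk_untreated_le_treated.
Qed.

Lemma admissible_theta_bounds : 1 <= theta P x <= risk_ratio (pYT_X P x).
Proof.
have [[_ [_ [_ [q_ge0 [q_sum _]]]]] [_ [overlap [mtr [mts _]]]]] := PA.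
by rewrite theta_ge1 // theta_le_risk_ratio // joint_treated_gt0.
Qed.

Lemma Gamma_design1 : D = Design1 -> Gamma O x = odds_ratio (pYT_X P x).
Proof.
move=> eD; have [_ [_ [_ [_ [_]]]]] := PA; rewrite eD => -[_ Pi_eq].
have p_gt0 y t : 0 < pYT_X P x y t by exact: joint_gt0_design1.
rewrite /Gamma /odds_ratio !Pi_eq // /pT_YX !pY_XE.
by field; rewrite !gt_eqF ?addr_gt0.
Qed.

Lemma Gamma_design2 : D = Design2 -> Gamma O x = risk_ratio (pYT_X P x).
Proof.
move=> eD; have [_ [_ [_ [_ [_]]]]] := PA; rewrite eD => -[_ PiT _ PiY].
have p1_gt0 t : 0 < pYT_X P x true t by exact: joint_treated_gt0.
have p0_ge0 t : 0 <= pYT_X P x false t by exact: pYT_X_ge0 PA.1 x false t.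
rewrite /Gamma /risk_ratio /risk /margT !PiY // !PiT // /pT_YX !pY_XE !pT_XE /margT.
have m_gt0 t : 0 < pYT_X P x true t + pYT_X P x false t.
  by have := p1_gt0 t; have := p0_ge0 t; lra.
by field; rewrite !gt_eqF ?m_gt0 ?addr_gt0.
Qed.

Lemma risk_ratio_le_Gamma : risk_ratio (pYT_X P x) <= Gamma O x.
Proof.
case eD : D.
- rewrite Gamma_design1 //; apply: risk_ratio_le_odds_ratio; last exact: admissible_risk_le.
  by move=> y t; exact: joint_gt0_design1.
- by rewrite Gamma_design2.
Qed.

End Identification.

Section Tilt.
Context {d : measure_display} {X : measurableType d} {R : realType}.
Variables (mu : {measure set X -> \bar R}) (O : @Observed d X R) (P : @Population d X R).
Variable k : R.

Definition tilt_norm x := k * pY_X P x true + pY_X P x false.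

Definition tilt_joint x y t := (tilt_norm x)^-1 * tilt k (pYT_X P x) y t.

Definition tilt_total := k * pY mu P true + pY mu P false.

Definition tilt_density x := pop_g P x * tilt_norm x / tilt_total.

Hypotheses (PA : Admissible mu Design1 O P) (PiP : PiNonzero O (suppX P)).
Hypothesis k_gt0 : 0 < k.

Let HP : IsPopulation mu P := PA.1.

Lemma tilt_norm_gt0 x : 0 < tilt_norm x.
Proof. by rewrite tilted_sum_gt0 ?(pY_X_ge0 HP) ?(pY_X_sum HP). Qed.

Let Z_gt0 : 0 < tilt_total.
Proof. by rewrite tilted_sum_gt0 ?(pY_ge0 HP) ?(pY_sum HP). Qed.

Let N_meas : measurable_fun setT tilt_norm.
Proof.
apply: measurable_funD; last exact: pY_X_meas HP false.
by apply: measurable_funM; [exact: measurable_cst | exact: pY_X_meas HP true].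
Qed.

Let p_gt0 x : suppX P x -> forall y t, 0 < pYT_X P x y t.
Proof. by move=> xP y t; apply: (joint_gt0_design1 PA PiP xP). Qed.

Lemma risk_tilt_joint x t : risk (tilt_joint x) t = risk (tilt k (pYT_X P x)) t.
Proof. by rewrite risk_scale // invr_neq0 // gt_eqF // tilt_norm_gt0. Qed.

Lemma tilt_density_gt0 x : (0 < tilt_density x) = (0 < pop_g P x).
Proof. by rewrite /tilt_density -mulrA pmulr_lgt0 // divr_gt0 ?tilt_norm_gt0. Qed.

Lemma tilt_factual : FactualModel mu P tilt_density tilt_joint.
Proof.
have [g_meas [g_ge0 [g_int _]]] := HP.
have N_gt0 := tilt_norm_gt0.
split.
- by apply: measurable_funM => //; exact: measurable_funM.
- by move=> x; rewrite divr_ge0 ?mulr_ge0 ?(ltW (N_gt0 x)) ?(ltW Z_gt0).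
- have Z_neq0 := lt0r_neq0 Z_gt0.
  under eq_integral => x _.
    have -> : tilt_density x = k / tilt_total * (pop_g P x * pY_X P x true) +
                               1 / tilt_total * (pop_g P x * pY_X P x false).
      by rewrite /tilt_density /tilt_norm; field.
    over.
  rewrite integral_pY_mix ?divr_ge0 ?ltW //; congr EFin.
  by move: Z_neq0; rewrite /tilt_total => Z_neq0; field.
- exact: tilt_density_gt0.
- move=> x y t; rewrite mulr_ge0 ?invr_ge0 ?(ltW (N_gt0 x)) //.
  have := pYT_X_ge0 HP x y t.
  by case: y => p_ge0; rewrite /tilt ?mul1r // mulr_ge0 // ltW.
- move=> x; have := lt0r_neq0 (N_gt0 x).
  by rewrite /margT /tilt_joint /tilt /tilt_norm !pY_XE => N_neq0; field.
- move=> y t; apply: measurable_funM.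
    exact: measurableT_comp (@measurable_inv R) N_meas.
  by apply: measurable_funM; [exact: measurable_cst | exact: pYT_X_meas HP y t].
- move=> x xP y t; apply: mulr_gt0; first by rewrite invr_gt0.
  exact: tilt_gt0 k_gt0 (p_gt0 xP) y t.
- move=> x xP; rewrite !risk_tilt_joint.
  exact: risk_le_tilt k_gt0 (p_gt0 xP) (admissible_risk_le PA xP).
Qed.

Lemma tilt_DesignRel (Q : @Population d X R) :
  pop_g Q = tilt_density -> (forall x, pYT_X Q x = tilt_joint x) -> DesignRel mu Design1 Q O.
Proof.
move=> gQ pQ; have [_ [_ [_ [_ [_ [f_eq Pi_eq]]]]]] := PA.
have Z_neq0 := lt0r_neq0 Z_gt0; have N_neq0 x := lt0r_neq0 (tilt_norm_gt0 x).
split=> [y x | t y x].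
  rewrite f_eq; apply/esym/(fX_Y_scale HP (c := (if y then k else 1) / tilt_total)).
    by case: y; rewrite divr_gt0.
  move=> z; rewrite gQ !pY_XE pQ /tilt_joint /tilt /tilt_density.
  by case: y; field; rewrite Z_neq0 N_neq0.
rewrite /suppX /= gQ tilt_density_gt0 => xP; rewrite Pi_eq //.
apply/esym/(pT_YX_scale (c := (tilt_norm x)^-1 * (if y then k else 1))).
  by rewrite mulf_neq0 ?invr_neq0 //; case: y; rewrite ?oner_neq0 ?gt_eqF.
by move=> s; rewrite pQ /tilt_joint /tilt mulrA.
Qed.

End Tilt.

Section Halve.
Context {d : measure_display} {X : measurableType d} {R : realType}.
Variables (mu : {measure set X -> \bar R}) (O : @Observed d X R) (P : @Population d X R).

Definition halve_joint x y t : R :=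
  if y then pYT_X P x true t / 2 else pYT_X P x false t + pYT_X P x true t / 2.

Lemma margT_halve x t : margT (halve_joint x) t = margT (pYT_X P x) t.
Proof. by rewrite /margT /halve_joint; field. Qed.

Lemma risk_halve x t : risk (halve_joint x) t = risk (pYT_X P x) t / 2.
Proof. by rewrite /risk margT_halve mulrAC. Qed.

Lemma risk_ratio_halve x : risk_ratio (halve_joint x) = risk_ratio (pYT_X P x).
Proof. by rewrite /risk_ratio !risk_halve invfM invrK mulrACA mulVf ?mulr1. Qed.

Hypotheses (PA : Admissible mu Design2 O P) (PiP : PiNonzero O (suppX P)).

Let HP : IsPopulation mu P := PA.1.

Lemma halve_factual : FactualModel mu P (pop_g P) halve_joint.
Proof.
have [g_meas [g_ge0 [g_int _]]] := HP.
have p_ge0 := pYT_X_ge0 HP.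
split=> //.
- by move=> x [] t; rewrite /halve_joint ?addr_ge0 ?divr_ge0.
- by move=> x; rewrite !margT_halve /margT -(pYT_X_sum HP x); ring.
- move=> [] t; rewrite /halve_joint.
    exact: measurable_funM (pYT_X_meas HP true t) (measurable_cst _).
  apply: measurable_funD; first exact: pYT_X_meas HP false t.
  exact: measurable_funM (pYT_X_meas HP true t) (measurable_cst _).
- move=> x xP [] t; have p1_gt0 := joint_treated_gt0 PA PiP xP t.
    by rewrite /halve_joint divr_gt0.
  by rewrite /halve_joint ltr_wpDl ?divr_gt0.
- move=> x xP; rewrite !risk_halve ler_pM2r ?invr_gt0 //.
  by have := admissible_risk_le PA xP.
Qed.

Lemma halve_DesignRel (Q : @Population d X R) :
  pop_g Q = pop_g P -> (forall x, pYT_X Q x = halve_joint x) -> DesignRel mu Design2 Q O.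
Proof.
move=> gQ pQ; have [_ [_ [_ [_ [_ [f0_eq Pi0_eq f1_eq Pi1_eq]]]]]] := PA.
have pQ1 x t : pYT_X Q x true t = 2^-1 * pYT_X P x true t by rewrite pQ mulrC.
have suppQ : suppX Q = suppX P by rewrite /suppX gQ.
split=> [x | t x | x | t x]; rewrite ?suppQ.
- by rewrite f0_eq gQ.
- by move=> xP; rewrite Pi0_eq // !pT_XE pQ margT_halve.
- rewrite f1_eq; apply/esym/(fX_Y_scale HP (c := 2^-1)) => // z.
  by rewrite gQ !pY_XE !pQ1 mulrCA -mulrDr.
- by move=> xP; rewrite Pi1_eq //; apply/esym/(pT_YX_scale (c := 2^-1)).
Qed.

End Halve.

Section Sharpness.
Context {d : measure_display} {X : measurableType d} {R : realType}.
Variables (mu : {measure set X -> \bar R}) (O : @Observed d X R) (P : @Population d X R).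
Hypothesis PiP : PiNonzero O (suppX P).
Variable x : X.
Hypothesis xP : suppX P x.

Lemma exists_admissible_theta1 D : Admissible mu D O P ->
  exists P', Admissible mu D O P' /\ theta P' x = 1.
Proof.
case: D => PA.
- have fm := tilt_factual PA PiP ltr01.
  exists (null_population (tilt_density mu P 1) (tilt_joint P 1)); split.
    apply: (null_admissible PA fm).
    by apply: (tilt_DesignRel PA ltr01) => // z; rewrite cf_joint.
  by rewrite (null_theta fm xP).
- have fm := halve_factual PA PiP.
  exists (null_population (pop_g P) (halve_joint P)); split.
    apply: (null_admissible PA fm).
    by apply: (halve_DesignRel PA) => // z; rewrite cf_joint.
  by rewrite (null_theta fm xP).
Qed.

Lemma exists_admissible_theta_gt D c : Admissible mu D O P -> c < Gamma O x ->
  exists P', Admissible mu D O P' /\ c < theta P' x.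
Proof.
case: D => PA.
- rewrite (Gamma_design1 PA PiP xP) //.
  have p_gt0 y t : 0 < pYT_X P x y t by apply: (joint_gt0_design1 PA PiP xP).
  move=> /(exists_tilt_risk_ratio_gt p_gt0)[k k_gt0 c_lt].
  have fm := tilt_factual PA PiP k_gt0.
  exists (extremal_population (tilt_density mu P k) (tilt_joint P k)); split.
    apply: (extremal_admissible PA fm).
    by apply: (tilt_DesignRel PA k_gt0) => // z; rewrite cf_joint.
  by rewrite (extremal_theta fm xP) /risk_ratio !(risk_tilt_joint PA k_gt0).
- rewrite (Gamma_design2 PA PiP xP) // => c_lt.
  have fm := halve_factual PA PiP.
  exists (extremal_population (pop_g P) (halve_joint P)); split.
    apply: (extremal_admissible PA fm).
    by apply: (halve_DesignRel PA) => // z; rewrite cf_joint.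
  by rewrite (extremal_theta fm xP) risk_ratio_halve.
Qed.

End Sharpness.

Theorem theorem3 (d : measure_display) (X : measurableType d) (R : realType)
    (mu : {measure set X -> \bar R}) (D : design)
    (P : @Population d X R) (O : @Observed d X R) :
  Admissible mu D O P -> PiNonzero O (suppX P) ->
  forall x : X, suppX P x ->
    [/\ 1 <= theta P x <= Gamma O x,
        (forall c : R, 1 < c ->
           exists P' : @Population d X R, Admissible mu D O P' /\ theta P' x < c)
      & (forall c : R, c < Gamma O x ->
           exists P' : @Population d X R, Admissible mu D O P' /\ c < theta P' x)].
Proof.
move=> PA PiP x xP; split.
- have /andP[theta_ge1 theta_le] := admissible_theta_bounds PA PiP xP.
  by rewrite theta_ge1 (le_trans theta_le (risk_ratio_le_Gamma PA PiP xP)).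
- move=> c c_gt1; have [P' [P'A theta1]] := exists_admissible_theta1 PiP xP PA.
  by exists P'; rewrite theta1.
- by move=> c; exact: (exists_admissible_theta_gt PiP xP PA).
Qed.
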